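(* Let $p$ be an odd prime and let $c,d$ be positive integers with $36\log_2 p\leq d\leq 3\log_2 c$. Let $L\in\mathbb{F}_p^{d\times c}$ be a matrix whose columns are pairwise distinct vectors of $\mathbb{F}_p^d$, and let $v$ be uniformly distributed on $\{0,1\}^d\subseteq\mathbb{F}_p^d$. Then \[ \mathbb{P}\big[L^\top v\in\{0,1\}^c\big]\leq 3\cdot 2^{-d/(36p^2)} . \] *)

From HB Require Import structures.
From mathcomp Require Import all_boot all_order all_algebra.
From mathcomp Require Import all_classical all_reals all_analysis.
Set Implicit Arguments. Unset Strict Implicit. Unset Printing Implicit Defensive.
Import Order.TTheory GRing.Theory Num.Theory.
Local Open Scope ring_scope.

Definition binvec (K : nzRingType) (n : nat) (v : 'cV[K]_n) : bool :=
  [forall i, (v i 0 == 0) || (v i 0 == 1)].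

Definition prob_binary (R : realType) (p d c : nat) (L : 'M['F_p]_(d, c)) : R :=
  (#|[set v : 'cV['F_p]_d | binvec v && binvec (L^T *m v)]|)%:R /
  (#|[set v : 'cV['F_p]_d | binvec v]|)%:R.

From HB Require Import structures.
From mathcomp Require Import all_boot all_order all_algebra.
From mathcomp Require Import all_classical all_reals all_analysis.
From mathcomp Require Import ring lra.
Import Order.TTheory GRing.Theory Num.Theory.
Local Open Scope ring_scope.

(* Greedily choose columns x_0, ..., x_(m-1) of L, pairwise disjoint pairs of rows
   (i_t, j_t) and a vector gam such that column x_t agrees with gam on the pairs s < t
   and differs from it in both rows of pair t.  While more than 1 + d(p-1) columns
   survive, some row takes a value other than its most popular one on at least p of
   them; fixing two rows to popular values then keeps a 1/p^2 fraction of the columns,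
   so c <= d p^(2m+1).
   If L^T v is binary, then with g = <gam, v> and w_t = L(., x_t) - gam every
   g + <w_t, v> is binary.  Since w_t vanishes on the earlier pairs, and x, x + a, x + b,
   x + a + b cannot all be 0 or 1 when a, b != 0 and 2 != 0, clearing the pairs one at
   a time shows that for each g at most a (3/4)^m fraction of the binary v qualify.
   Hence P <= p (3/4)^m, which the bound on c turns into the claim. *)

Section Binary.
Context {K : nzRingType}.

Definition binary (x : K) : bool := (x == 0) || (x == 1).

Lemma binaryE (x : K) : binary x -> x = (x == 1)%:R.
Proof. by case/orP => /eqP ->; rewrite ?eqxx // eq_sym oner_eq0. Qed.

Lemma binary_nat (b : bool) : binary b%:R.
Proof. by case: b; rewrite /binary eqxx ?orbT. Qed.

Lemma natr_bool_inj : injective (fun b : bool => b%:R : K).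
Proof. by case; case => //= /eqP; rewrite ?oner_eq0 // eq_sym oner_eq0. Qed.

Lemma binvecP n (v : 'cV[K]_n) : reflect (forall i, binary (v i 0)) (binvec v).
Proof. exact: forallP. Qed.

Lemma binary_square (x a b : K) : 2%:R != 0 :> K -> a != 0 -> b != 0 ->
  binary x -> binary (x + a) -> binary (x + b) -> ~~ binary (x + a + b).
Proof.
have addr_eql (y z : K) : (y + z == y) = (z == 0).
  by rewrite -{2}[y]addr0 (inj_eq (addrI y)).
move=> two_neq0 a_neq0 b_neq0 /orP[] /eqP ->.
  rewrite !add0r /binary (negbTE a_neq0) (negbTE b_neq0) /= => /eqP -> /eqP ->.
  by rewrite (negbTE two_neq0) addr_eql oner_eq0.
rewrite /binary !addr_eql (negbTE a_neq0) (negbTE b_neq0) !orbF.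
rewrite (addrC 1 a) (addrC 1 b) !addr_eq0 => /eqP -> /eqP ->.
rewrite addNr add0r opprK eq_sym oner_eq0 /= -subr_eq0 -opprD oppr_eq0.
exact: two_neq0.
Qed.

End Binary.

Lemma card_le_fiber {T T' : finType} (f : T -> T') (A : {set T}) (B : {set T'}) n :
  (forall x, x \in A -> f x \in B) -> (forall y, #|[set x in A | f x == y]| <= n)%N ->
  (#|A| <= n * #|B|)%N.
Proof.
move=> fAB fiber_le; rewrite -sum1_card (partition_big f (mem B)) //=.
rewrite mulnC -sum_nat_const; apply: leq_sum => y _.
apply: leq_trans (fiber_le y); rewrite sum1dep_card.
by apply/eq_leq/eq_card => x; rewrite !inE.
Qed.

Definition dotv {K : nzRingType} {n : nat} (u : 'I_n -> K) (v : 'cV[K]_n) : K :=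
  \sum_i u i * v i 0.

Section TriangularCount.
Variables (K : finNzRingType) (d m : nat).
Variables (ii jj : nat -> 'I_d) (w : nat -> 'I_d -> K) (g : K).
Hypothesis two_neq0 : 2%:R != 0 :> K.
Hypothesis pair_neq : forall t, (t < m)%N -> ii t != jj t.
Hypothesis pairs_disjoint : forall s t, (s < t < m)%N ->
  [&& ii t != ii s, ii t != jj s, jj t != ii s & jj t != jj s].
Hypothesis w_vanish : forall s t, (s < t < m)%N -> w t (ii s) = 0 /\ w t (jj s) = 0.
Hypothesis w_neq0 : forall t, (t < m)%N -> w t (ii t) != 0 /\ w t (jj t) != 0.

Definition set_pair k (bs : bool * bool) (v : 'cV[K]_d) : 'cV[K]_d :=
  \col_i (if i == ii k then (bs.1 : nat)%:R else if i == jj k then (bs.2 : nat)%:R else v i 0).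

Local Notation clear_pair k := (set_pair k (false, false)).

Definition pair_bits k (v : 'cV[K]_d) := (v (ii k) 0 == 1, v (jj k) 0 == 1).

Definition vanishes_below k (v : 'cV[K]_d) :=
  [forall s : 'I_m, (s < k)%N ==> (v (ii s) 0 == 0) && (v (jj s) 0 == 0)].

Definition cleared k := [set v | binvec v && vanishes_below k v].

Definition admissible k :=
  [set v in cleared k | [forall t : 'I_m, (k <= t)%N ==> binary (g + dotv (w t) v)]].

Lemma set_pair_bits k v : binvec v -> set_pair k (pair_bits k v) v = v.
Proof.
move=> /binvecP v_bin; apply/matrixP => i j; rewrite (ord1 j) mxE.
by case: ifP => [/eqP-> | _]; [|case: ifP => [/eqP-> |]]; rewrite -?binaryE.
Qed.

Lemma set_pair_set_pair k bs bs' v : set_pair k bs (set_pair k bs' v) = set_pair k bs v.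
Proof.
apply/matrixP => i j; rewrite !mxE.
by case: (i == ii k); case: (i == jj k).
Qed.

Lemma pair_bits_set_pair k bs v : (k < m)%N -> pair_bits k (set_pair k bs v) = bs.
Proof.
have bitE (b : bool) : ((b : nat)%:R == 1 :> K) = b.
  by apply/eqP/idP => [|->] //; exact: (@natr_bool_inj K _ true).
move/pair_neq; rewrite eq_sym => /negbTE ji.
by case: bs => b1 b2; rewrite /pair_bits !mxE eqxx ji eqxx /= !bitE.
Qed.

Lemma clear_pair_id k v : binvec v -> v (ii k) 0 = 0 -> v (jj k) 0 = 0 ->
  clear_pair k v = v.
Proof.
move=> v_bin vi vj; rewrite -[RHS](@set_pair_bits k v v_bin).
by rewrite /pair_bits vi vj eq_sym oner_eq0.
Qed.

Lemma dotv_set_pair u k bs v : (k < m)%N ->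
  dotv u (set_pair k bs v) =
  dotv u (clear_pair k v) + u (ii k) * (bs.1 : nat)%:R + u (jj k) * (bs.2 : nat)%:R.
Proof.
move/pair_neq => ij; rewrite /dotv (bigD1 (ii k)) // (bigD1 (jj k)) 1?eq_sym //=.
rewrite [X in _ = X + _ + _](bigD1 (ii k)) // (bigD1 (jj k)) 1?eq_sym //=.
rewrite !mxE !eqxx eq_sym (negbTE ij) /= !mulr0 !add0r addrC.
rewrite [RHS]addrAC [_ + u (jj k) * _]addrC; congr (_ + _ + _).
apply: eq_bigr => i /andP [ni nj].
by rewrite !mxE (negbTE ni) (negbTE nj).
Qed.

Lemma dotv_set_pair_vanish u k bs v : u (ii k) = 0 -> u (jj k) = 0 ->
  dotv u (set_pair k bs v) = dotv u v.
Proof.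
move=> ui uj; apply: eq_bigr => i _; rewrite mxE.
by case: ifP => [/eqP-> | _]; [|case: ifP => [/eqP-> |]]; rewrite ?ui ?uj ?mul0r.
Qed.

Lemma clear_pair_admissible k v : (k < m)%N -> v \in admissible k ->
  clear_pair k v \in admissible k.+1.
Proof.
move=> km; rewrite !inE -!andbA => /and3P [/binvecP v_bin v_van v_adm].
apply/and3P; split.
- apply/binvecP => i; rewrite mxE.
  by case: ifP => _; [|case: ifP => _]; rewrite ?binary_nat ?v_bin.
- apply/forallP => s; apply/implyP; rewrite ltnS leq_eqVlt => /orP [/eqP-> | lt_sk].
    by rewrite !mxE !eqxx /=; case: ifP; rewrite ?mulr0n.
  have /andP [/eqP vi /eqP vj] := implyP (forallP v_van s) lt_sk.
  by rewrite !mxE /= vi vj; do !case: ifP => _; rewrite ?mulr0n eqxx.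
- apply/forallP => t; apply/implyP => lt_kt.
  have [wi wj] : w t (ii k) = 0 /\ w t (jj k) = 0 by apply: w_vanish; rewrite lt_kt /=.
  by rewrite dotv_set_pair_vanish //; exact: implyP (forallP v_adm t) (ltnW lt_kt).
Qed.

Lemma card_admissible_fiber k u : (k < m)%N ->
  (#|[set v in admissible k | clear_pair k v == u]| <= 3)%N.
Proof.
move=> km; set F := [set v in _ | _].
pose S := [set bs | binary (g + dotv (w k) (set_pair k bs u))].
have F_sub : F \subset (fun bs => set_pair k bs u) @: S.
  apply/fintype.subsetP => v; rewrite !inE => /andP [v_adm /eqP v_u].
  move: v_adm => /andP [/andP [v_bin _] /forallP /(_ (Ordinal km)) /= v_k].
  apply/imsetP; exists (pair_bits k v); rewrite ?inE -v_u set_pair_set_pair set_pair_bits //.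
  exact: implyP v_k (leqnn k).
have S_proper : S \proper [set: bool * bool].
  rewrite properT; apply/eqP => S_full.
  have S_bin bs : binary (g + dotv (w k) (set_pair k bs u)).
    by have /[!inE] : bs \in S by rewrite S_full inE.
  have [wi_neq0 wj_neq0] := w_neq0 k km.
  have := S_bin (true, true); apply/negP.
  rewrite dotv_set_pair //= !mulr1 !addrA.
  apply: binary_square two_neq0 wi_neq0 wj_neq0 _ _ _.
  - exact: S_bin.
  - by have := S_bin (true, false); rewrite dotv_set_pair //= mulr1 mulr0 addr0 addrA.
  - by have := S_bin (false, true); rewrite dotv_set_pair //= mulr1 mulr0 addr0 addrA.
rewrite -ltnS; apply: leq_ltn_trans (subset_leq_card F_sub) _.
apply: leq_ltn_trans (leq_imset_card _ _) _.
by move: (proper_card S_proper); rewrite cardsT card_prod card_bool.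
Qed.

Lemma card_admissible_step k : (k < m)%N -> (#|admissible k| <= 3 * #|admissible k.+1|)%N.
Proof.
move=> km; apply: (card_le_fiber (clear_pair k)).
  by move=> v; exact: clear_pair_admissible.
by move=> u; exact: card_admissible_fiber.
Qed.

Lemma card_cleared_step k : (k < m)%N -> (4 * #|cleared k.+1| <= #|cleared k|)%N.
Proof.
move=> km; pose f (x : 'cV[K]_d * (bool * bool)) := set_pair k x.2 x.1.
have clearedP u : u \in cleared k.+1 -> clear_pair k u = u.
  rewrite inE => /andP [u_bin /forallP /(_ (Ordinal km))].
  by rewrite /= ltnSn => /andP [/eqP ui /eqP uj]; rewrite clear_pair_id.
have f_inj : {in finset.setX (cleared k.+1) [set: bool * bool] &, injective f}.
  move=> [u1 bs1] [u2 bs2] /setXP [u1_cl _] /setXP [u2_cl _]; rewrite /f /= => f_eq.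
  have := congr1 (pair_bits k) f_eq; rewrite !pair_bits_set_pair // => <-.
  have := congr1 (clear_pair k) f_eq.
  by rewrite !set_pair_set_pair clearedP // clearedP // => ->.
have card4 : #|[set: bool * bool]| = 4%N by rewrite cardsT card_prod card_bool.
rewrite -card4 mulnC -cardsX -(card_in_imset f_inj).
apply/subset_leq_card/fintype.subsetP => _ /imsetP [[u bs] + ->].
rewrite !inE /= andbT => /andP [/binvecP u_bin /forallP u_van]; apply/andP; split.
  apply/binvecP => i; rewrite mxE.
  by case: ifP => _; [|case: ifP => _]; rewrite ?binary_nat ?u_bin.
apply/forallP => s; apply/implyP => lt_sk.
have /and4P [/negbTE n1 /negbTE n2 /negbTE n3 /negbTE n4] : [&& ii k != ii s,
  ii k != jj s, jj k != ii s & jj k != jj s] by apply: pairs_disjoint; rewrite lt_sk.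
rewrite !mxE ![_ == ii k]eq_sym ![_ == jj k]eq_sym n1 n2 n3 n4.
by have := implyP (u_van s) (ltnW lt_sk).
Qed.

Lemma card_admissible_le : (#|admissible 0| * 4 ^ m <= 3 ^ m * #|cleared 0|)%N.
Proof.
have admissible_le n : (n <= m)%N -> (#|admissible 0| <= 3 ^ n * #|admissible n|)%N.
  elim: n => [|n IHn] n_le; first by rewrite mul1n.
  apply: leq_trans (IHn (ltnW n_le)) _.
  by rewrite expnS (mulnC 3) -mulnA leq_mul2l card_admissible_step ?orbT.
have cleared_ge n : (n <= m)%N -> (4 ^ n * #|cleared n| <= #|cleared 0|)%N.
  elim: n => [|n IHn] n_le; first by rewrite mul1n.
  apply: leq_trans (IHn (ltnW n_le)).
  by rewrite expnS (mulnC 4) -mulnA leq_mul2l card_cleared_step ?orbT.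
have admissible_sub : (#|admissible m| <= #|cleared m|)%N.
  by apply/subset_leq_card/fintype.subsetP => v; rewrite inE => /andP [].
apply: leq_trans (_ : 3 ^ m * (4 ^ m * #|cleared m|) <= _)%N; last first.
  by rewrite leq_mul2l cleared_ge ?orbT.
rewrite mulnC mulnCA leq_mul2l; apply/orP; right.
by apply: leq_trans (admissible_le m (leqnn m)) _; rewrite leq_mul2l admissible_sub orbT.
Qed.

Lemma card_constrained_binvec :
  (#|[set v | binvec v && [forall t : 'I_m, binary (g + dotv (w t) v)]]| * 4 ^ m
   <= 3 ^ m * #|[set v : 'cV[K]_d | binvec v]|)%N.
Proof.
have admissible0 : admissible 0 =
    [set v | binvec v && [forall t : 'I_m, binary (g + dotv (w t) v)]].
  apply/setP => v; rewrite !inE.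
  have -> : vanishes_below 0 v by apply/forallP.
  by rewrite andbT; congr (_ && _); apply: eq_forallb => t.
have cleared0 : cleared 0 = [set v | binvec v].
  apply/setP => v; rewrite !inE.
  have -> : vanishes_below 0 v by apply/forallP.
  by rewrite andbT.
by rewrite -admissible0 -cleared0 card_admissible_le.
Qed.

End TriangularCount.

Lemma leq_card_bigcup {I T : finType} (P : pred I) (A : I -> {set T}) :
  (#|\bigcup_(i | P i) A i| <= \sum_(i | P i) #|A i|)%N.
Proof.
elim/big_rec2: _ => [|i B n _ IH]; first by rewrite cards0.
by rewrite cardsU; apply: leq_trans (leq_subr _ _) _; rewrite leq_add2l.
Qed.

Lemma popular_value {I T : finType} (X : {set I}) (f : I -> T) : (0 < #|T|)%N ->
  exists a, (#|X| <= #|T| * #|[set y in X | f y == a]|)%N.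
Proof.
case/card_gt0P => a0 _.
case: (@arg_maxnP T a0 xpredT (fun a => #|[set y in X | f y == a]|)) => // a _ a_max.
exists a; rewrite -sum1_card (partition_big f xpredT) //= -sum_nat_const.
apply: leq_sum => b _; rewrite sum1dep_card; exact: a_max.
Qed.

Section ChainSelection.
Variables (T : finType) (d c : nat) (L : 'M[T]_(d, c)) (i0 : 'I_d) (j0 : 'I_c).
Hypothesis Ldist : injective (fun j : 'I_c => col j L).

Fact alphabet_gt0 : (0 < #|T|)%N.
Proof. by apply/card_gt0P; exists (L i0 j0). Qed.

Definition agree_on (U : {set 'I_d}) (J : {set 'I_c}) :=
  forall i j1 j2, i \in U -> j1 \in J -> j2 \in J -> L i j1 = L i j2.

Lemma col_eq j1 j2 : (forall i, L i j1 = L i j2) -> j1 = j2.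
Proof. by move=> eqL; apply: Ldist; apply/matrixP => i k; rewrite !mxE. Qed.

Lemma exists_spread_row {U J} : agree_on U J -> (1 + #|~: U| * (#|T| - 1) < #|J|)%N ->
  exists i a, [/\ i \notin U, (#|J| <= #|T| * #|[set y in J | L i y == a]|)%N
                & (#|T| <= #|[set y in J | L i y != a]|)%N].
Proof.
move=> agr J_big; pose a_ i := xchoose (popular_value J (L i) alphabet_gt0).
pose N i := [set y in J | L i y != a_ i].
suff /existsP [i /andP [iU N_big]] : [exists i, (i \notin U) && (#|T| <= #|N i|)%N].
  by exists i, (a_ i); split => //; exact: xchooseP (popular_value J (L i) alphabet_gt0).
(* Otherwise [J] is covered by the at most one column taking every popular value and
   by the sets [N i], each of size less than #|T|. *)
apply: contraLR J_big => /existsPn N_small; rewrite -leqNgt.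
pose M := [set y in J | [forall i, (i \notin U) ==> (L i y == a_ i)]].
have M_le1 : (#|M| <= 1)%N.
  apply/card_le1_eqP => y1 y2; rewrite !inE => /andP [y1J /forallP y1a] /andP [y2J /forallP y2a].
  apply: col_eq => i; have [iU | iU] := boolP (i \in U); first exact: agr.
  by rewrite (eqP (implyP (y1a i) iU)) (eqP (implyP (y2a i) iU)).
have J_sub : J \subset M :|: \bigcup_(i in ~: U) N i.
  apply/fintype.subsetP => y yJ; rewrite !inE yJ /=.
  have [//| /forallPn [i]] := boolP [forall i, (i \notin U) ==> (L i y == a_ i)].
  rewrite negb_imply => /andP [iU yi].
  by apply/bigcupP; exists i; rewrite !inE ?yJ.
have N_le i : i \in ~: U -> (#|N i| <= #|T| - 1)%N.
  rewrite inE => iU; move: (N_small i); rewrite iU -ltnNge subn1 => N_lt.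
  by rewrite -ltnS prednK ?alphabet_gt0.
apply: leq_trans (subset_leq_card J_sub) _; rewrite cardsU.
apply: leq_trans (leq_subr _ _) _; apply: leq_add M_le1 _.
apply: leq_trans (leq_card_bigcup _ _) _.
by rewrite -sum_nat_const; apply: leq_sum.
Qed.

Lemma exists_second_row {U J i a} : agree_on U J -> i \notin U ->
  (#|T| <= #|[set y in J | L i y != a]|)%N ->
  exists j b x, [/\ j \notin U, j != i, x \in [set y in J | L i y != a], L j x != b &
    (#|[set y in J | L i y == a]|
     <= #|T| * #|[set y in J | (L i y == a) && (L j y == b)]|)%N].
Proof.
move=> agr iU N_big; set N := [set y in J | _] in N_big *; set Ca := [set y in J | _].
pose b_ j := xchoose (popular_value Ca (L j) alphabet_gt0).
suff /existsP [j /existsP [x /and4P [jU ji xN xb]]] :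
    [exists j, exists x, [&& j \notin U, j != i, x \in N & L j x != b_ j]].
  exists j, (b_ j), x; split => //.
  apply: leq_trans (xchooseP (popular_value Ca (L j) alphabet_gt0)) _.
  by rewrite leq_mul2l; apply/orP; right; apply/eq_leq/eq_card => y; rewrite !inE andbA.
(* Otherwise the columns in [N] agree off row [i], so [L i] is injective on [N]. *)
apply: contraLR N_big => /existsPn N_const; rewrite -ltnNge.
have Li_inj : {in N &, injective (L i)}.
  move=> y1 y2 y1N y2N eq_i; apply: col_eq => k; have [kU | kU] := boolP (k \in U).
    by move: y1N y2N; rewrite !inE => /andP [y1J _] /andP [y2J _]; exact: agr.
  have [-> // | ki] := eqVneq k i.
  have b_k y : y \in N -> L k y = b_ k.
    by move=> yN; apply/eqP; move/existsPn: (N_const k) => /(_ y); rewrite kU ki yN /= negbK.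
  by rewrite !b_k.
have LiN_sub : L i @: N \subset [set~ a].
  by apply/fintype.subsetP => _ /imsetP [y + ->]; rewrite !inE => /andP [].
rewrite -(card_in_imset Li_inj); apply: leq_ltn_trans (subset_leq_card LiN_sub) _.
by rewrite cardsC1 prednK ?alphabet_gt0.
Qed.

Lemma split_step {U J} : agree_on U J -> (1 + #|~: U| * (#|T| - 1) < #|J|)%N ->
  exists i j a b x, [/\ i \notin U, j \notin U, i != j, x \in J &
    [/\ L i x != a, L j x != b &
        (#|J| <= #|T| ^ 2 * #|[set y in J | (L i y == a) && (L j y == b)]|)%N]].
Proof.
move=> agr J_big; have [i [a [iU Ja N_big]]] := exists_spread_row agr J_big.
have [j [b [x [jU ji + xb Cab]]]] := exists_second_row agr iU N_big.
rewrite inE => /andP [xJ xa].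
have ij : i != j by rewrite eq_sym.
exists i, j, a, b, x; split => //; split => //.
by apply: leq_trans Ja _; rewrite expnS expn1 -mulnA leq_mul2l Cab orbT.
Qed.

(* [J] holds the surviving columns, which agree on the rows [U]; [gam] records their
   common values. *)
Definition pair_chain (J : {set 'I_c}) (U : {set 'I_d}) m (idx : nat -> 'I_c)
    (ii jj : nat -> 'I_d) (gam : 'I_d -> T) : Prop :=
  [/\ forall t, (t < m)%N -> [/\ idx t \in J, ii t \notin U, jj t \notin U & ii t != jj t],
      forall s t, (s < t < m)%N -> [&& ii t != ii s, ii t != jj s, jj t != ii s & jj t != jj s],
      forall s t, (s < t < m)%N -> L (ii s) (idx t) = gam (ii s) /\ L (jj s) (idx t) = gam (jj s) &
      forall t, (t < m)%N -> L (ii t) (idx t) != gam (ii t) /\ L (jj t) (idx t) != gam (jj t)].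

Lemma pair_chain_cons {J : {set 'I_c}} {U : {set 'I_d}} {i j : 'I_d} {a b : T} {x : 'I_c}
    {m idx ii jj gam} :
  i \notin U -> j \notin U -> i != j -> x \in J -> L i x != a -> L j x != b ->
  pair_chain [set y in J | (L i y == a) && (L j y == b)] (i |: (j |: U)) m idx ii jj gam ->
  pair_chain J U m.+1 (fun t => if t is t'.+1 then idx t' else x)
    (fun t => if t is t'.+1 then ii t' else i) (fun t => if t is t'.+1 then jj t' else j)
    (fun k => if k == i then a else if k == j then b else gam k).
Proof.
move=> iU jU ij xJ xa xb [chain_in chain_disj chain_const chain_neq].
have notin_ij k : k \notin i |: (j |: U) -> [/\ k != i, k != j & k \notin U].
  by rewrite !inE !negb_or => /and3P [].
have ji : j != i by rewrite eq_sym.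
split.
- case=> [|t] //= lt_tm; have [+ iiU jjU ->] := chain_in t lt_tm.
  rewrite inE => /andP [-> _].
  by have [_ _ ->] := notin_ij _ iiU; have [_ _ ->] := notin_ij _ jjU.
- case=> [|s] [|t] //= => [lt_tm | /andP [/[!ltnS] lt_st lt_tm]]; last first.
    by apply: chain_disj; rewrite lt_st.
  have [_ iiU jjU _] := chain_in t lt_tm.
  by have [-> -> _] := notin_ij _ iiU; have [-> -> _] := notin_ij _ jjU.
- case=> [|s] [|t] //= => [lt_tm | /andP [/[!ltnS] lt_st lt_tm]].
    have [+ _ _ _] := chain_in t lt_tm; rewrite inE => /andP [_ /andP [/eqP -> /eqP ->]].
    by rewrite eqxx (negbTE ji) eqxx.
  have [iiU jjU] : ii s \notin i |: (j |: U) /\ jj s \notin i |: (j |: U).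
    by have [_ ? ? _] := chain_in s (ltn_trans lt_st lt_tm).
  have [/negbTE -> /negbTE -> _] := notin_ij _ iiU.
  have [/negbTE -> /negbTE -> _] := notin_ij _ jjU.
  by apply: chain_const; rewrite lt_st.
- case=> [|t] //= lt_tm; first by rewrite eqxx (negbTE ji) eqxx.
  have [_ iiU jjU _] := chain_in t lt_tm.
  have [/negbTE -> /negbTE -> _] := notin_ij _ iiU.
  have [/negbTE -> /negbTE -> _] := notin_ij _ jjU.
  exact: chain_neq.
Qed.

Lemma exists_pair_chain {J U} : agree_on U J ->
  exists m idx ii jj gam, pair_chain J U m idx ii jj gam /\
    (#|J| <= (1 + d * (#|T| - 1)) * #|T| ^ (2 * m))%N.
Proof.
have [n] := ubnP #|~: U|; elim: n J U => // n IHn J U U_lt agr.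
have [J_small | J_big] := leqP #|J| (1 + #|~: U| * (#|T| - 1)).
  exists 0%N, (fun=> j0), (fun=> i0), (fun=> i0), (L^~ j0); split.
    by split=> [t | s t | s t | t]; rewrite ?ltn0 ?andbF.
  rewrite muln0 expn0 muln1; apply: leq_trans J_small _.
  by rewrite leq_add2l leq_mul2r -[X in (_ <= X)%N]card_ord max_card orbT.
have [i [j [a [b [x [iU jU ij xJ [xa xb J_le]]]]]]] := split_step agr J_big.
set J' := [set y in J | _] in J_le.
have U'_lt : (#|~: (i |: (j |: U))| < n)%N.
  rewrite -ltnS; apply: leq_trans U_lt; rewrite ltnS; apply: proper_card.
  rewrite properC; apply/properP; split; last by exists i => //; rewrite !inE eqxx.
  by apply/fintype.subsetP => k kU; rewrite !inE kU !orbT.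
have agr' : agree_on (i |: (j |: U)) J'.
  move=> k y1 y2; rewrite !inE => + /andP [y1J /andP [/eqP y1i /eqP y1j]].
  move=> + /andP [y2J /andP [/eqP y2i /eqP y2j]].
  by case/orP => [/eqP-> | /orP [/eqP-> | kU]]; rewrite ?y1i ?y2i ?y1j ?y2j //; exact: agr.
have [m [idx [ii [jj [gam [chain J'_le]]]]]] := IHn J' _ U'_lt agr'.
eexists m.+1, _, _, _, _; split; first exact: pair_chain_cons iU jU ij xJ xa xb chain.
by apply: leq_trans J_le _; rewrite mulnS expnD mulnCA leq_mul2l J'_le orbT.
Qed.

Lemma exists_full_pair_chain :
  exists m idx ii jj gam, pair_chain [set: 'I_c] (finset.set0 : {set 'I_d}) m idx ii jj gam /\
    (c <= (1 + d * (#|T| - 1)) * #|T| ^ (2 * m))%N.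
Proof.
have agr0 : agree_on (finset.set0 : {set 'I_d}) [set: 'I_c] by move=> i j1 j2; rewrite inE.
have [m [idx [ii [jj [gam [chain J_le]]]]]] := exists_pair_chain agr0.
exists m, idx, ii, jj, gam; split => //.
by move: J_le; rewrite cardsT card_ord.
Qed.

End ChainSelection.

Lemma card_binary_image_le {K : finNzRingType} {d c : nat} {L : 'M[K]_(d, c)} :
  2%:R != 0 :> K -> (0 < d)%N -> (0 < c)%N -> injective (fun j : 'I_c => col j L) ->
  exists m, (c <= d * #|K| ^ (2 * m).+1)%N /\
    (#|[set v : 'cV[K]_d | binvec v && binvec (L^T *m v)]| * 4 ^ m
      <= #|K| * 3 ^ m * #|[set v : 'cV[K]_d | binvec v]|)%N.
Proof.
move=> two_neq0 d_gt0 c_gt0 Ldist.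
have [m [idx [ii [jj [gam [[chain_in chain_disj chain_const chain_neq] c_le]]]]]] :=
  @exists_full_pair_chain _ _ _ L (Ordinal d_gt0) (Ordinal c_gt0) Ldist.
exists m; split.
  apply: leq_trans c_le _; rewrite expnS mulnA leq_mul2r; apply/orP; right.
  have K_gt0 : (0 < #|K|)%N by apply/card_gt0P; exists 0.
  by rewrite mulnBr muln1 addnBA ?leq_pmulr // leq_subLR leq_add2r.
pose w t i := L i (idx t) - gam i.
have pair_neq t : (t < m)%N -> ii t != jj t by case/chain_in.
have w_vanish s t : (s < t < m)%N -> w t (ii s) = 0 /\ w t (jj s) = 0.
  by move/chain_const => [Li Lj]; rewrite /w Li Lj !subrr.
have w_neq0 t : (t < m)%N -> w t (ii t) != 0 /\ w t (jj t) != 0.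
  by move/chain_neq => [Li Lj]; rewrite /w !subr_eq0.
have count g :=
  @card_constrained_binvec K d m ii jj w g two_neq0 pair_neq chain_disj w_vanish w_neq0.
set E := [set v | _ && _]; set B := [set v | _].
(* Entry [idx t] of [L^T *m v] is [dotv gam v + dotv (w t) v]. *)
have -> : #|E| = (\sum_(g : K) #|[set v in E | dotv gam v == g]|)%N.
  rewrite -sum1_card (partition_big (dotv gam) xpredT) //=.
  by apply: eq_bigr => g _; rewrite sum1dep_card.
rewrite big_distrl -mulnA -sum_nat_const; apply: leq_sum => g _.
apply: leq_trans (count g); rewrite leq_mul2r; apply/orP; right.
apply/subset_leq_card/fintype.subsetP => v; rewrite !inE -andbA => /and3P [-> /forallP Lv /eqP gv].
apply/forallP => t; move: (Lv (idx t)); rewrite !mxE -gv /dotv -big_split /=.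
by congr binary; apply: eq_bigr => i _; rewrite -mulrDl /w addrC subrK mxE.
Qed.

Section LogBounds.
Context {R : realType}.

Lemma ln_le_tangent (a x : R) : 0 < a -> 0 < x -> ln x <= ln a + x / a - 1.
Proof.
move=> a_gt0 x_gt0; have := @le_ln1Dx R (x / a - 1) ltac:(have := divr_gt0 x_gt0 a_gt0; lra).
by rewrite addrC subrK ln_div ?posrE //; lra.
Qed.

Lemma ln2_bounds : 1 / 2 <= ln (2 : R) <= 1.
Proof.
have := @ln_le_tangent 1 2 ltac:(lra) ltac:(lra); have := @ln_le_tangent 2 1 ltac:(lra) ltac:(lra).
by rewrite ln1; lra.
Qed.

Lemma ln3_ge : 5 / 6 <= ln (3 : R).
Proof.
have := @ln_le_tangent 3 2 ltac:(lra) ltac:(lra); have /andP[] := ln2_bounds; lra.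
Qed.

Lemma ln_3_4_le : ln (3 / 4 : R) <= - (1 / 4).
Proof. by have := @ln_le_tangent 1 (3 / 4) ltac:(lra) ltac:(lra); rewrite ln1; lra. Qed.

Lemma mul3_powR2N (a : R) : 3 * 2 `^ (- a) = expR (ln 3 - a * ln 2).
Proof. by rewrite /powR pnatr_eq0 /= expRD lnK ?posrE // mulNr. Qed.

Lemma one_le_powR (P D : R) : 0 < P -> D * ln 2 <= 36 * P ^+ 2 * ln 3 ->
  1 <= 3 * 2 `^ (- (D / (36 * P ^+ 2))).
Proof.
move=> P_gt0 D_le; rewrite mul3_powR2N -[leLHS](expR0 R) ler_expR subr_ge0 mulrAC.
by rewrite ler_pdivrMr ?mulr_gt0 ?exprn_gt0 //; lra.
Qed.

Lemma geometric_le_powR (P D C : R) (m : nat) :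
  3 <= P -> 0 < D -> 0 < C -> C <= D * P ^+ (2 * m).+1 -> D * ln 2 <= 3 * ln C ->
  36 * P ^+ 2 * ln 3 < D * ln 2 ->
  P * (3 / 4) ^+ m <= 3 * 2 `^ (- (D / (36 * P ^+ 2))).
Proof.
move=> P_ge3 D_gt0 C_gt0 C_le lnC_ge q_lt.
have /andP [ln2_lo ln2_hi] := ln2_bounds; have ln3_lo := ln3_ge.
set x := ln P; set y := D * ln 2 in lnC_ge q_lt *; set q := 36 * P ^+ 2 in q_lt *.
set M : R := m%:R; have M_ge0 : 0 <= M by rewrite ler0n.
have P_gt0 : 0 < P by lra.
have P_sq : 3 * P <= P ^+ 2 by rewrite expr2; nra.
have q_gt0 : 0 < q by rewrite /q; nra.
have x_gt0 : 0 < x by apply: ln_gt0; lra.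
have x_le : x <= P / 2 by have := @ln_le_tangent 2 P ltac:(lra) ltac:(lra); rewrite -/x; lra.
have lnD_le : ln D <= 4 + y / 16.
  have := @ln_le_tangent 32 D ltac:(lra) D_gt0.
  have -> : ln (32 : R) = 5 * ln 2.
    by rewrite (_ : 32 = 2 ^+ 5) ?lnXn ?mulr_natl // -natrX.
  by rewrite /y; nra.
have lnC_le : ln C <= ln D + 2 * (M * x) + x.
  have DP_gt0 : 0 < D * P ^+ (2 * m).+1 by rewrite mulr_gt0 ?exprn_gt0.
  apply: le_trans (_ : ln (D * P ^+ (2 * m).+1) <= _).
    by rewrite ler_ln ?posrE.
  rewrite lnM ?posrE ?exprn_gt0 ?lnXn //.
  by rewrite -/x mulrSr -[x *+ (2 * m)]mulr_natl natrM -/M; lra.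
have Mx_ge : 13 / 16 * y - 12 - 3 * x <= 6 * (M * x) by lra.
have xyq_le : x * (y / q) <= y / 216.
  have xq_le : x / q <= 1 / 216 by rewrite ler_pdivrMr // /q; nra.
  have y_ge0 : 0 <= y by rewrite /y; nra.
  by rewrite mulrCA; have := ler_wpM2l y_ge0 xq_le; lra.
have y_gt : 30 * P ^+ 2 < y.
  suff : 30 * P ^+ 2 <= q * ln 3 by lra.
  by have : 0 <= P ^+ 2 := exprn_ge0 2 (ltW P_gt0); rewrite /q; nra.
(* As ln (3/4) <= -1/4, this is what remains after taking logarithms. *)
have M_ge : 4 * (x + y / q - ln 3) <= M.
  rewrite -(ler_pM2l x_gt0).
  have -> : x * (4 * (x + y / q - ln 3)) = 4 * (x * x) + 4 * (x * (y / q)) - 4 * (x * ln 3).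
    by ring.
  have : x * x <= P ^+ 2 / 4 by rewrite expr2; nra.
  have : 0 <= x * ln 3 by nra.
  rewrite [x * M]mulrC; lra.
have -> : P * (3 / 4) ^+ m = expR (x + ln (3 / 4) * M).
  by rewrite expRD lnK ?posrE ?expRM_natr ?lnK ?posrE //; lra.
rewrite mul3_powR2N mulrAC -/y ler_expR; have := ln_3_4_le; nra.
Qed.

End LogBounds.

Lemma odd_prime_ge3 {p} : prime p -> odd p -> (3 <= p)%N.
Proof. by move=> /prime_gt1; case: p => [|[|[|]]]. Qed.

Lemma Fp_two_neq0 {p} : prime p -> odd p -> 2%:R != 0 :> 'F_p.
Proof.
move=> p_pr p_odd; rewrite -(dvdn_pcharf (pchar_Fp p_pr)).
by apply/negP => /(dvdn_leq (ltn0Sn 1)); rewrite leqNgt odd_prime_ge3.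
Qed.

Section Probability.
Context {R : realType} {p d c : nat} {L : 'M['F_p]_(d, c)}.

Let B := #|[set v : 'cV['F_p]_d | binvec v]|.
Let E := #|[set v : 'cV['F_p]_d | binvec v && binvec (L^T *m v)]|.

Fact card_binvec_gt0 : (0 < B)%N.
Proof. by apply/card_gt0P; exists 0; rewrite inE; apply/forallP => i; rewrite mxE /binary eqxx. Qed.

Lemma prob_binary_le1 : prob_binary R L <= 1.
Proof.
rewrite ler_pdivrMr ?ltr0n ?card_binvec_gt0 // mul1r ler_nat.
by apply/subset_leq_card/fintype.subsetP => v; rewrite !inE => /andP [].
Qed.

Lemma prob_binary_le_geometric {m} : (E * 4 ^ m <= p * 3 ^ m * B)%N ->
  prob_binary R L <= p%:R * (3 / 4) ^+ m.
Proof.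
rewrite -(ler_nat R) !natrM !natrX => E_le.
rewrite ler_pdivrMr ?ltr0n ?card_binvec_gt0 // expr_div_n mulrA mulrAC.
by rewrite ler_pdivlMr ?exprn_gt0 // mulrAC.
Qed.

End Probability.

Theorem lemma4p1 (R : realType) (p c d : nat)
  (pprime : prime p) (podd : odd p) (cpos : (0 < c)%N) (dpos : (0 < d)%N)
  (hdlow : 36 * (ln (p%:R : R) / ln 2) <= d%:R)
  (hdup : d%:R <= 3 * (ln (c%:R : R) / ln 2))
  (L : 'M['F_p]_(d, c))
  (Ldist : injective (fun j : 'I_c => col j L)) :
  prob_binary R L <= 3 * (2 : R) `^ (- (d%:R / (36 * (p%:R ^+ 2)))).
Proof.
have [m [c_le E_le]] := card_binary_image_le (Fp_two_neq0 pprime podd) dpos cpos Ldist.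
rewrite card_Fp // in c_le E_le.
have p_ge3 : 3 <= p%:R :> R by rewrite (ler_nat R 3 p); exact: odd_prime_ge3.
have d_ln2_le : d%:R * ln 2 <= 3 * ln (c%:R : R).
  by rewrite -ler_pdivlMr ?ln_gt0 ?ltr1n // -mulrA.
have [q_ge | q_lt] := lerP (d%:R * ln 2) (36 * p%:R ^+ 2 * ln (3 : R)).
  by apply: (le_trans prob_binary_le1); apply: one_le_powR => //; lra.
apply: (le_trans (prob_binary_le_geometric E_le)).
by apply: (geometric_le_powR _ _ c%:R); rewrite ?ltr0n // -natrX -natrM ler_nat.
Qed.
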